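(* Let $\Lambda$ be a recursive $\varepsilon$-number, and let $I$, $H$, $R_n$, $S_n$, $R_n^\alpha$, $S_n^\alpha$ be as in the context. Then for all $x, y \in H$, $n < \omega$ and $\alpha < \Lambda$: (1) $x R_n^{\alpha+1} y$ if and only if there exists $z \in H$ with $x R_n z$ and $z R_n^{\alpha} y$; (2) $x S_n^{\alpha+1} y$ if and only if there exists $z \in H$ with $x S_n z$ and $z S_n^{\alpha} y$.
   Context: Fix a recursive ordinal $\Lambda$ that is an $\varepsilon$-number, i.e. $\omega^\Lambda = \Lambda$. The ordinal logarithm is defined by $\ell(0)=0$ and $\ell(\alpha+\omega^\beta)=\beta$. An $\ell$-sequence (Ignatiev sequence) is a sequence of ordinals $x=\langle x_0,x_1,x_2,\dots\rangle$ indexed by $\omega$ with $x_{i+1}\le \ell(x_i)$ for all $i<\omega$. Let $I$ be the set of $\ell$-sequences all of whose entries are $<\Lambda$, and let $H\subseteq I$ be the set of those $x\in I$ such that $x_j=0$ for some $j<\omega$. For $n<\omega$, define $x R_n y$ for $x,y\in I$ (and $x S_n y$ for $x,y\in H$, the same condition) by: $x_m>y_m$ for all $m\le n$ and $x_i\ge y_i$ for all $i>n$. Define $R_n^\alpha$ on $I$ recursively: $x R_n^0 y$ iff $x=y$; $x R_n^{1+\alpha} y$ iff for every $\beta<1+\alpha$ there is $z\in I$ with $x R_n z$ and $z R_n^\beta y$. Define $S_n^\alpha$ on $H$ in the same way, with $S_n$ in place of $R_n$ and $z$ ranging over $H$. *)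

From mathcomp Require Import all_boot.
Set Implicit Arguments. Unset Strict Implicit. Unset Printing Implicit Defensive.

(* The ordinals below Lambda are modelled as natural numbers equipped with a
   decidable (boolean) strict well-order [lt]; Lambda is its order type. *)
Section Ord.
Variable lt : nat -> nat -> bool.

Definition ole (a b : nat) : Prop := ~ lt b a.

Definition is_wellorder : Prop :=
  (forall a, ~ lt a a) /\
  (forall a b c, lt a b -> lt b c -> lt a c) /\
  (forall a b, lt a b \/ a = b \/ lt b a) /\
  well_founded (fun a b => lt a b).

Definition is_zero (a : nat) : Prop := forall d, ~ lt d a.

Definition is_succ (a b : nat) : Prop := lt a b /\ forall d, lt a d -> ole b d.

(* Cantor-normal-form words: omega^beta is the order type of the finite
   non-increasing lists of ordinals < beta, ordered lexicographically. *)
Fixpoint nonincr (s : list nat) : Prop :=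
  match s with
  | a :: ((b :: _) as t) => ole b a /\ nonincr t
  | _ => True
  end.

Fixpoint lexlt (s t : list nat) : Prop :=
  match s, t with
  | nil, _ :: _ => True
  | a :: s', b :: t' => lt a b \/ (a = b /\ lexlt s' t')
  | _, _ => False
  end.

Fixpoint allP (B : nat -> Prop) (s : list nat) : Prop :=
  match s with nil => True | a :: t => B a /\ allP B t end.

Definition cnf_word (B : nat -> Prop) (s : list nat) : Prop :=
  nonincr s /\ allP B s.

Definition iso_to_words (D B : nat -> Prop) : Prop :=
  exists f : nat -> list nat,
    (forall d, D d -> cnf_word B (f d)) /\
    (forall w, cnf_word B w -> exists d, D d /\ f d = w) /\
    (forall d d', D d -> D d' -> (lt d d' <-> lexlt (f d) (f d'))).

(* Lambda is an epsilon-number: omega^Lambda = Lambda *)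
Definition is_epsilon : Prop := iso_to_words (fun _ => True) (fun _ => True).

(* ordinal logarithm as a relation: ell g = b  iff
   g = 0 and b = 0, or g = a + omega^b for some a, i.e. [a, g) has type omega^b *)
Definition ell (g b : nat) : Prop :=
  (is_zero g /\ is_zero b) \/
  (exists a, iso_to_words (fun d => ole a d /\ lt d g) (fun d => lt d b)).

Definition seqo := nat -> nat.

Definition in_I (x : seqo) : Prop :=
  forall i, exists b, ell (x i) b /\ ole (x i.+1) b.

Definition in_H (x : seqo) : Prop := in_I x /\ exists j, is_zero (x j).

(* x R_n y  (also S_n on H) *)
Definition Rn (n : nat) (x y : seqo) : Prop :=
  (forall m, m <= n -> lt (y m) (x m)) /\ (forall i, n < i -> ole (y i) (x i)).

(* R_n^alpha (P = in_I) and S_n^alpha (P = in_H):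
   x R^0 y iff x = y; for alpha <> 0 (i.e. alpha = 1 + alpha'),
   x R^alpha y iff for all beta < alpha there is z in P with x R_n z and z R^beta y.
   Since lt is well-founded, this inductive predicate is the unique solution
   of the recursive definition. *)
Inductive Rpow (P : seqo -> Prop) (n : nat) : nat -> seqo -> seqo -> Prop :=
  | Rpow0 : forall a x, is_zero a -> Rpow P n a x x
  | RpowS : forall a x y, ~ is_zero a ->
      (forall b, lt b a -> exists z, P z /\ Rn n x z /\ Rpow P n b z y) ->
      Rpow P n a x y.

End Ord.

From Stdlib Require Import Classical FunctionalExtensionality.
From mathcomp Require Import all_boot.

(* The forward implications are the defining clause of R^(alpha+1) at
   beta = alpha.  Conversely, R^beta is decreasing in beta > 0 and R^beta
   implies R_n for beta > 0, so a single R_n step in front of an R^alpha chain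
   gives R^(alpha+1).  The one real point is (1) from left to right: the
   witness z produced by the definition lies in I, not necessarily in H.
   Since y is in H it vanishes beyond some K >= n; splicing z up to K with y
   afterwards gives an l-sequence (l(z_K) >= 0 = y_(K+1)) that reaches 0, and
   splicing every intermediate sequence of the chain in the same way preserves
   all the R_n steps. *)

Set Implicit Arguments.

Section WellOrder.
Variable lt : nat -> nat -> bool.
Hypothesis lt_wo : is_wellorder lt.

Lemma ltxx a : ~ lt a a.
Proof. by case: lt_wo. Qed.

Lemma lt_trans a b c : lt a b -> lt b c -> lt a c.
Proof. by case: lt_wo => _ [lt_tr _]; apply: lt_tr. Qed.

Lemma lt_total a b : lt a b \/ a = b \/ lt b a.
Proof. by case: lt_wo => _ [_ [lt_tot _]]; apply: lt_tot. Qed.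

Lemma lt_wf : well_founded (fun a b => lt a b).
Proof. by case: lt_wo => _ [_ []]. Qed.

Lemma ole_trans a b c : ole lt a b -> ole lt b c -> ole lt a c.
Proof.
move=> le_ab le_bc lt_ca; case: (lt_total c b) => [lt_cb|[eq_cb|lt_bc]].
- exact: le_bc.
- by subst; apply: le_ab.
- exact: le_ab (lt_trans lt_bc lt_ca).
Qed.

Lemma zero_ole z a : is_zero lt z -> ole lt z a.
Proof. by move=> z0; apply: z0. Qed.

Lemma ole_zero a b : ole lt a b -> is_zero lt b -> is_zero lt a.
Proof.
move=> le_ab b0 d lt_da; case: (lt_total a b) => [lt_ab|[eq_ab|lt_ba]].
- exact: b0 lt_ab.
- by subst; apply: b0 lt_da.
- exact: le_ab.
Qed.

Lemma exists_zero : exists c, is_zero lt c.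
Proof.
elim/(well_founded_ind lt_wf): 0 => d IH.
apply: NNPP => no_zero; apply: (no_zero); exists d => e lt_ed.
by have [c c0] := IH e lt_ed; apply: no_zero; exists c.
Qed.

Lemma zero_lt_nonzero c a : is_zero lt c -> ~ is_zero lt a -> lt c a.
Proof.
move=> c0 a_nz; case: (lt_total c a) => [//|[eq_ca|lt_ac]].
- by subst.
- by case: (c0 a).
Qed.

Lemma succ_nonzero a a1 : is_succ lt a a1 -> ~ is_zero lt a1.
Proof. by case=> lt_aa1 _ a10; apply: (a10 a). Qed.

Lemma lt_succ b a a1 : is_succ lt a a1 -> lt b a1 -> lt b a \/ b = a.
Proof.
case=> _ succ lt_ba1; case: (lt_total b a) => [|[|lt_ab]]; auto.
by case: (succ b lt_ab).
Qed.

Lemma ell_zero g b : is_zero lt g -> ell lt g b -> is_zero lt b.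
Proof.
move=> g0 [[_ //]|[a [f [_ [onto _]]]]].
have [d [[_ lt_dg] _]] : exists d, (ole lt a d /\ lt d g) /\ f d = nil by apply: onto.
by case: (g0 d).
Qed.

Lemma Rn_trans n x z y : Rn lt n x z -> Rn lt n z y -> Rn lt n x y.
Proof.
move=> [lt_xz le_xz] [lt_zy le_zy]; split=> [m le_mn | i lt_ni].
- exact: lt_trans (lt_zy m le_mn) (lt_xz m le_mn).
- exact: ole_trans (le_zy i lt_ni) (le_xz i lt_ni).
Qed.

Section Powers.
Variables (P : seqo -> Prop) (n : nat).

Lemma Rpow_zero a x y : Rpow lt P n a x y -> is_zero lt a -> x = y.
Proof. by case. Qed.

Lemma Rpow_nonzero a x y : Rpow lt P n a x y -> ~ is_zero lt a ->
  forall b, lt b a -> exists z, P z /\ Rn lt n x z /\ Rpow lt P n b z y.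
Proof. by case. Qed.

Lemma Rpow_Rn a x y : Rpow lt P n a x y -> ~ is_zero lt a -> Rn lt n x y.
Proof.
move=> xRy a_nz; have [c c0] := exists_zero.
have [z [_ [xRz zRy]]] := Rpow_nonzero xRy a_nz (zero_lt_nonzero c0 a_nz).
by rewrite -(Rpow_zero zRy c0).
Qed.

Lemma Rpow_lt a b x y : Rpow lt P n a x y -> ~ is_zero lt a -> ~ is_zero lt b ->
  lt b a -> Rpow lt P n b x y.
Proof.
move=> xRy a_nz b_nz lt_ba; apply: RpowS => // c lt_cb.
exact: Rpow_nonzero xRy a_nz c (lt_trans lt_cb lt_ba).
Qed.

Lemma Rpow_succ a a1 x y : is_succ lt a a1 -> P y ->
  Rpow lt P n a1 x y <-> exists z, P z /\ Rn lt n x z /\ Rpow lt P n a z y.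
Proof.
move=> succ_a Py; split=> [xRy | [z [Pz [xRz zRy]]]].
  exact: Rpow_nonzero xRy (succ_nonzero succ_a) a succ_a.1.
apply: RpowS => [|b /(lt_succ succ_a) [lt_ba|->]]; last by exists z.
  exact: succ_nonzero succ_a.
have a_nz : ~ is_zero lt a by move=> a0; apply: (a0 b).
case: (classic (is_zero lt b)) => [b0|b_nz].
- exists y; split=> //; split; last exact: Rpow0.
  exact: Rn_trans xRz (Rpow_Rn zRy a_nz).
- by exists z; split=> //; split=> //; apply: Rpow_lt zRy a_nz b_nz lt_ba.
Qed.

End Powers.

Lemma H_eventually_zero y : in_H lt y -> exists K, forall i, K < i -> is_zero lt (y i).
Proof.
move=> [yI [j yj0]]; exists j; elim=> // i IH lt_ji.
have yi0 : is_zero lt (y i).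
  by move: lt_ji; rewrite ltnS leq_eqVlt => /orP [/eqP <-|/IH].
have [b [ell_b le_b]] := yI i.
exact: ole_zero le_b (ell_zero yi0 ell_b).
Qed.

Definition splice (K : nat) (z y : seqo) : seqo := fun i => if i <= K then z i else y i.

Lemma splice_id K y : splice K y y = y.
Proof. by apply: functional_extensionality => i; rewrite /splice; case: (i <= K). Qed.

Lemma splice_I K z y : in_I lt z -> in_I lt y ->
  (forall i, K < i -> is_zero lt (y i)) -> in_I lt (splice K z y).
Proof.
move=> zI yI y0 i; rewrite /splice.
case: (ltngtP i K) => [lt_iK|lt_Ki|->]; [exact: zI|exact: yI|].
have [b [ell_b _]] := zI K; exists b; split=> //.
by apply/zero_ole/y0.
Qed.

Lemma Rn_splice n K x z y y' : n <= K -> Rn lt n x z ->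
  (forall i, K < i -> ole lt (y' i) (y i)) -> Rn lt n (splice K x y) (splice K z y').
Proof.
move=> le_nK [lt_xz le_xz] le_y; rewrite /splice; split=> [m le_mn | i lt_ni].
- by rewrite (leq_trans le_mn le_nK); apply: lt_xz.
- by case: leqP => [_|lt_Ki]; [apply: le_xz | apply: le_y].
Qed.

Lemma Rpow_splice n K y : n <= K -> in_I lt y -> (forall i, K < i -> is_zero lt (y i)) ->
  forall a z, Rpow lt (in_I lt) n a z y -> Rpow lt (in_I lt) n a (splice K z y) y.
Proof.
move=> le_nK yI y0; elim/(well_founded_ind lt_wf) => a IH z zRy.
case: (classic (is_zero lt a)) => [a0|a_nz].
  by rewrite (Rpow_zero zRy a0) splice_id; apply: Rpow0.
apply: RpowS => // b lt_ba.
have [w [wI [zRw wRy]]] := Rpow_nonzero zRy a_nz lt_ba.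
exists (splice K w y); split; first exact: splice_I.
split; last exact: IH.
by apply: Rn_splice => // i _; apply: ltxx.
Qed.

Lemma Rpow_I_witness_H n a x z y : in_H lt y -> in_I lt z -> Rn lt n x z ->
  Rpow lt (in_I lt) n a z y ->
  exists z', in_H lt z' /\ Rn lt n x z' /\ Rpow lt (in_I lt) n a z' y.
Proof.
move=> yH zI xRz zRy; have [K0 y_tail0] := H_eventually_zero yH.
set K := maxn K0 n.
have y0 i : K < i -> is_zero lt (y i).
  by move=> lt_Ki; apply/y_tail0/(leq_ltn_trans (leq_maxl K0 n) lt_Ki).
have le_nK : n <= K by apply: leq_maxr.
exists (splice K z y); split; [split|split].
- exact: splice_I zI yH.1 y0.
- by exists K.+1; rewrite /splice ltnn; apply: y0.
- by rewrite -(splice_id K x); apply: Rn_splice => // i /y0; apply: zero_ole.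
- exact: Rpow_splice le_nK yH.1 y0 a z zRy.
Qed.

End WellOrder.

Theorem proposition4p6 (lt : nat -> nat -> bool) :
  is_wellorder lt -> is_epsilon lt ->
  forall (x y : seqo) (n alpha alpha1 : nat),
    in_H lt x -> in_H lt y -> is_succ lt alpha alpha1 ->
    (Rpow lt (in_I lt) n alpha1 x y <->
       exists z, in_H lt z /\ Rn lt n x z /\ Rpow lt (in_I lt) n alpha z y) /\
    (Rpow lt (in_H lt) n alpha1 x y <->
       exists z, in_H lt z /\ Rn lt n x z /\ Rpow lt (in_H lt) n alpha z y).
Proof.
move=> lt_wo _ x y n alpha alpha1 _ yH succ_alpha.
have Rpow_succ_xy P := Rpow_succ lt_wo P n x y succ_alpha.
split; last exact: Rpow_succ_xy.
rewrite (Rpow_succ_xy _ yH.1); split.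
- by move=> [z [zI [xRz zRy]]]; apply: Rpow_I_witness_H xRz zRy.
- by move=> [z [[zI _] steps]]; exists z.
Qed.
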